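(* Let $G$ be a heap and let $G^1=\langle V^1,s^1_1,s^1_2,\mathsf{null},\mathsf{root}\rangle$ and $G^2=\langle V^2,s^2_1,s^2_2,\mathsf{null},\mathsf{root}\rangle$ be orable graphs with $V^1\cap V^2=\{\mathsf{null},\mathsf{root}\}$. Then $G\to G^1+G^2$ if and only if $G\to G^1$ or $G\to G^2$.
   Context: A graph is a tuple $\langle V,s_1,s_2,\mathsf{null},\mathsf{root}\rangle$ with $V$ finite, $\mathsf{root}\neq\mathsf{null}$ in $V$, $s_1,s_2\subseteq V\times V$, and $\langle\mathsf{null},x\rangle\in s_i$ iff $x=\mathsf{null}$. A heap is a graph in which $s_1,s_2$ are total functions and every node other than $\mathsf{null}$ is reachable from $\mathsf{root}$ along $s_1\cup s_2$. A homomorphism $h:G\to G'$ is a map on nodes preserving $s_1$- and $s_2$-edges with $h(x)=\mathsf{root}'$ iff $x=\mathsf{root}$ and $h(x)=\mathsf{null}'$ iff $x=\mathsf{null}$; $G\to G'$ means one exists. A graph is orable if for all nodes $x$: $\langle\mathsf{root},x\rangle\in s_2$ iff $x=\mathsf{null}$. For orable $G^1,G^2$ sharing $\mathsf{null},\mathsf{root}$ with $V^1\cap V^2=\{\mathsf{null},\mathsf{root}\}$, the sum $G^1+G^2=\langle V^1\cup V^2,\ s^1_1\cup s^2_1,\ s^1_2\cup s^2_2,\ \mathsf{null},\mathsf{root}\rangle$. *)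

From mathcomp Require Import all_boot.
Set Implicit Arguments. Unset Strict Implicit. Unset Printing Implicit Defensive.

(* A graph <V, s1, s2, null, root>: nodes are drawn from an ambient finite
   type T (so V is finite); s1, s2 are relations on T that are required
   (by is_graph) to be contained in V x V. *)
Record graph (T : finType) := Graph {
  gV : {set T};
  gs1 : rel T;
  gs2 : rel T;
  gnull : T;
  groot : T }.

Definition is_graph (T : finType) (G : graph T) : Prop :=
  [/\ gnull G \in gV G, groot G \in gV G & groot G != gnull G] /\
  [/\ (forall x y, gs1 G x y -> x \in gV G /\ y \in gV G),
      (forall x y, gs2 G x y -> x \in gV G /\ y \in gV G),
      (forall x, x \in gV G -> (gs1 G (gnull G) x <-> x = gnull G)) &
      (forall x, x \in gV G -> (gs2 G (gnull G) x <-> x = gnull G))].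

Definition gedge (T : finType) (G : graph T) : rel T :=
  fun x y => gs1 G x y || gs2 G x y.

Definition is_heap (T : finType) (G : graph T) : Prop :=
  [/\ is_graph G,
      (forall x, x \in gV G -> exists! y, gs1 G x y),
      (forall x, x \in gV G -> exists! y, gs2 G x y) &
      (forall x, x \in gV G -> x != gnull G -> connect (gedge G) (groot G) x)].

(* homomorphism G -> G' (only its values on V matter) *)
Definition is_hom (T T' : finType) (G : graph T) (G' : graph T') (h : T -> T') : Prop :=
  [/\ (forall x, x \in gV G -> h x \in gV G'),
      (forall x y, gs1 G x y -> gs1 G' (h x) (h y)),
      (forall x y, gs2 G x y -> gs2 G' (h x) (h y)),
      (forall x, x \in gV G -> (h x = groot G' <-> x = groot G)) &
      (forall x, x \in gV G -> (h x = gnull G' <-> x = gnull G))].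

Definition hom_exists (T T' : finType) (G : graph T) (G' : graph T') : Prop :=
  exists h : T -> T', is_hom G G' h.

Notation "G ---> G'" := (hom_exists G G') (at level 70).

Definition orable (T : finType) (G : graph T) : Prop :=
  forall x, x \in gV G -> (gs2 G (groot G) x <-> x = gnull G).

(* sum of two graphs on the same ambient type sharing null and root *)
Definition gsum (T : finType) (G1 G2 : graph T) : graph T :=
  Graph (gV G1 :|: gV G2)
        (fun x y => gs1 G1 x y || gs1 G2 x y)
        (fun x y => gs2 G1 x y || gs2 G2 x y)
        (gnull G1) (groot G1).

From mathcomp Require Import all_boot.

Set Implicit Arguments.
Unset Strict Implicit.
Unset Printing Implicit Defensive.

(* Let h : G -> G1 + G2 and let r1 be the s1-successor of the root of G; the
   edge root -> h r1 lies in G1, say.  Then h maps every node of G into V1, by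
   induction along paths from the root: null and root are shared, the root's
   s1-edge goes to r1 and its s2-edge to null (the sum is orable), and a node
   mapped into V1 \ {null, root} lies outside V2, so its edges in the sum are
   edges of G1.  Hence h is a homomorphism into G1. *)

Lemma connect_fwd_closed (T : finType) (e : rel T) (a : pred T) :
  (forall x y, e x y -> a x -> a y) -> forall x y, connect e x y -> a x -> a y.
Proof.
move=> cl_a x _ /connectP[p e_p ->].
elim: p x e_p => //= y p IHp x /andP[e_xy e_p] a_x.
exact: IHp e_p (cl_a _ _ e_xy a_x).
Qed.

Section GraphFacts.

Variables (T : finType) (G : graph T).
Hypothesis graphG : is_graph G.

Lemma graph_s1_null y : gs1 G (gnull G) y <-> y = gnull G.
Proof.
case: graphG => [[nV _ _] [E1 _ N1 _]].
by split=> [e|->]; [apply/N1 => //; exact: (E1 _ _ e).2 | apply/N1].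
Qed.

Lemma graph_s2_null y : gs2 G (gnull G) y <-> y = gnull G.
Proof.
case: graphG => [[nV _ _] [_ E2 _ N2]].
by split=> [e|->]; [apply/N2 => //; exact: (E2 _ _ e).2 | apply/N2].
Qed.

Lemma orable_s2_root y : orable G -> gs2 G (groot G) y <-> y = gnull G.
Proof.
case: graphG => [[nV _ _] [_ E2 _ _]] orG.
by split=> [e|->]; [apply/orG => //; exact: (E2 _ _ e).2 | apply/orG].
Qed.

End GraphFacts.

Lemma heap_is_graph (T : finType) (G : graph T) : is_heap G -> is_graph G.
Proof. by case. Qed.

Lemma heap_s1_functional (T : finType) (G : graph T) x y z :
  is_heap G -> gs1 G x y -> gs1 G x z -> y = z.
Proof.
case=> [[_ [E1 _ _ _]] U1 _ _] e_xy e_xz.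
have [w [_ w_uniq]] := U1 _ (E1 _ _ e_xy).1.
by rewrite -(w_uniq _ e_xy) (w_uniq _ e_xz).
Qed.

Section Homomorphisms.

Variables (T T' : finType) (G : graph T) (G' : graph T') (h : T -> T').
Hypotheses (graphG : is_graph G) (hom_h : is_hom G G' h).

Lemma hom_root : h (groot G) = groot G'.
Proof. by case: graphG hom_h => [[_ rV _] _] [_ _ _ hr _]; apply/hr. Qed.

Lemma hom_null : h (gnull G) = gnull G'.
Proof. by case: graphG hom_h => [[nV _ _] _] [_ _ _ _ hn]; apply/hn. Qed.

Lemma hom_orable_s2_root y : orable G' -> gs2 G (groot G) y -> y = gnull G.
Proof.
case: graphG hom_h => [_ [_ E2 _ _]] [hV _ h2 _ hn] orG' e.
have yV := (E2 _ _ e).2; apply/hn => //; apply/orG'; first exact: hV.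
by rewrite -hom_root; apply: h2.
Qed.

End Homomorphisms.

Section Sum.

Variables (T : finType) (G1 G2 : graph T).
Hypotheses (graphG1 : is_graph G1) (graphG2 : is_graph G2).
Hypotheses (null12 : gnull G1 = gnull G2) (root12 : groot G1 = groot G2).

Lemma gsum_s1l x y : x \notin gV G2 -> gs1 (gsum G1 G2) x y -> gs1 G1 x y.
Proof.
case: graphG2 => _ [E1 _ _ _] x2 /orP[//|/E1[x2' _]].
by rewrite x2' in x2.
Qed.

Lemma gsum_s2l x y : x \notin gV G2 -> gs2 (gsum G1 G2) x y -> gs2 G1 x y.
Proof.
case: graphG2 => _ [_ E2 _ _] x2 /orP[//|/E2[x2' _]].
by rewrite x2' in x2.
Qed.

Lemma gsum_orable : orable G1 -> orable G2 -> orable (gsum G1 G2).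
Proof.
move=> or1 or2 x _; split=> [/orP[]|->].
- by move/(orable_s2_root graphG1 _ or1).
- by rewrite /= root12 null12 => /(orable_s2_root graphG2 _ or2).
by apply/orP; left; apply/(orable_s2_root graphG1 _ or1).
Qed.

Lemma is_hom_gsuml (T0 : finType) (G : graph T0) (h : T0 -> T) :
  is_hom G G1 h -> is_hom G (gsum G1 G2) h.
Proof.
case=> hV h1 h2 hr hn; split=> //=.
- by move=> x xV; rewrite inE hV.
- by move=> x y e; rewrite h1.
- by move=> x y e; rewrite h2.
Qed.

Lemma is_hom_gsumC (T0 : finType) (G : graph T0) (h : T0 -> T) :
  is_hom G (gsum G1 G2) h -> is_hom G (gsum G2 G1) h.
Proof.
case=> hV h1 h2 hr hn; split=> /=.
- by move=> x /hV; rewrite !inE orbC.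
- by move=> x y /h1; rewrite orbC.
- by move=> x y /h2; rewrite orbC.
- by rewrite -root12.
- by rewrite -null12.
Qed.

End Sum.

Section HomIntoSum.

Variables (T0 T : finType) (G : graph T0) (G1 G2 : graph T) (h : T0 -> T).
Variable r1 : T0.
Hypotheses (heapG : is_heap G) (graphG1 : is_graph G1) (graphG2 : is_graph G2).
Hypotheses (or1 : orable G1) (or2 : orable G2).
Hypotheses (null12 : gnull G1 = gnull G2) (root12 : groot G1 = groot G2).
Hypothesis V12 : gV G1 :&: gV G2 = [set gnull G1; groot G1].
Hypothesis hom_h : is_hom G (gsum G1 G2) h.
Hypotheses (root_r1 : gs1 G (groot G) r1) (hroot_r1 : gs1 G1 (groot G1) (h r1)).

Let graphG : is_graph G := heap_is_graph heapG.

Lemma hom_gsum_notin_r x :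
  x \in gV G -> x != gnull G -> x != groot G -> h x \in gV G1 -> h x \notin gV G2.
Proof.
case: hom_h => _ _ _ hr hn xV xn xr hx1; apply/negP => hx2.
have : h x \in gV G1 :&: gV G2 by rewrite inE hx1 hx2.
rewrite V12 !inE => /orP[] /eqP hx.
- by case/eqP: xn; apply/hn.
- by case/eqP: xr; apply/hr.
Qed.

Lemma hom_gsum_s1l x y : h x \in gV G1 -> gs1 G x y -> gs1 G1 (h x) (h y).
Proof.
case: (graphG) hom_h => [_ [E1 _ _ _]] [_ h1 _ _ _] hx1 e.
have [xn|xn] := eqVneq x (gnull G).
  move: e; rewrite xn => /(graph_s1_null graphG) ->.
  by rewrite (hom_null graphG hom_h); apply/(graph_s1_null graphG1).
have [xr|xr] := eqVneq x (groot G).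
  move: e; rewrite xr => /(heap_s1_functional heapG root_r1) <-.
  by rewrite (hom_root graphG hom_h).
exact: (gsum_s1l graphG2 (hom_gsum_notin_r (E1 _ _ e).1 xn xr hx1) (h1 _ _ e)).
Qed.

Lemma hom_gsum_s2l x y : h x \in gV G1 -> gs2 G x y -> gs2 G1 (h x) (h y).
Proof.
case: (graphG) hom_h => [_ [_ E2 _ _]] [_ _ h2 _ _] hx1 e.
have [xn|xn] := eqVneq x (gnull G).
  move: e; rewrite xn => /(graph_s2_null graphG) ->.
  by rewrite (hom_null graphG hom_h); apply/(graph_s2_null graphG1).
have [xr|xr] := eqVneq x (groot G).
  have or12 := gsum_orable graphG1 graphG2 null12 root12 or1 or2.
  move: e; rewrite xr => /(hom_orable_s2_root graphG hom_h or12) ->.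
  by rewrite (hom_root graphG hom_h) (hom_null graphG hom_h); apply/orable_s2_root.
exact: (gsum_s2l graphG2 (hom_gsum_notin_r (E2 _ _ e).1 xn xr hx1) (h2 _ _ e)).
Qed.

Lemma hom_gsum_V1 x : x \in gV G -> h x \in gV G1.
Proof.
case: (heapG) graphG1 => [[[_ rV _] _] _ _ reach] [[nV1 rV1 _] [E1 E2 _ _]] xV.
have [->|xn] := eqVneq x (gnull G); first by rewrite (hom_null graphG hom_h).
apply: (@connect_fwd_closed _ _ (fun z => h z \in gV G1) _ _ _ (reach _ xV xn)).
  move=> u v /orP[] e hu.
  - exact: (E1 _ _ (hom_gsum_s1l hu e)).2.
  - exact: (E2 _ _ (hom_gsum_s2l hu e)).2.
by rewrite /= (hom_root graphG hom_h).
Qed.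

Lemma hom_gsum_l : is_hom G G1 h.
Proof.
case: (graphG) hom_h => [_ [E1 E2 _ _]] [_ _ _ hr hn]; split=> //.
- exact: hom_gsum_V1.
- by move=> x y e; apply: hom_gsum_s1l (hom_gsum_V1 (E1 _ _ e).1) e.
- by move=> x y e; apply: hom_gsum_s2l (hom_gsum_V1 (E2 _ _ e).1) e.
Qed.

End HomIntoSum.

Theorem proposition30 (T0 T : finType) (G : graph T0) (G1 G2 : graph T) :
  is_heap G -> is_graph G1 -> is_graph G2 -> orable G1 -> orable G2 ->
  gnull G1 = gnull G2 -> groot G1 = groot G2 ->
  gV G1 :&: gV G2 = [set gnull G1; groot G1] ->
  (G ---> gsum G1 G2 <-> (G ---> G1 \/ G ---> G2)).
Proof.
move=> heapG graphG1 graphG2 or1 or2 null12 root12 V12; split; last first.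
  case=> -[h hom_h]; exists h; first exact: is_hom_gsuml.
  by apply: is_hom_gsumC (is_hom_gsuml _ hom_h).
case=> h hom_h; have graphG := heap_is_graph heapG.
have [r1 [root_r1 _]] : exists! r1, gs1 G (groot G) r1.
  by case: heapG graphG => _ U1 _ _ [[_ rV _] _]; apply: U1.
have [_ h1 _ _ _] := hom_h.
move: (h1 _ _ root_r1); rewrite (hom_root graphG hom_h) => /orP[e|e].
  left; exists h.
  exact: (hom_gsum_l heapG graphG1 graphG2 or1 or2 null12 root12 V12 hom_h
            root_r1 e).
have V21 : gV G2 :&: gV G1 = [set gnull G2; groot G2].
  by rewrite setIC V12 null12 root12.
have e2 : gs1 G2 (groot G2) (h r1) by rewrite -root12.
right; exists h.
exact: (hom_gsum_l heapG graphG2 graphG1 or2 or1 (esym null12) (esym root12) V21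
          (is_hom_gsumC null12 root12 hom_h) root_r1 e2).
Qed.
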